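(* $\mathfrak{mc}(\mathsf{null},\subseteq)=\operatorname{non}(\mathsf{null})$.
   Context: $\mathsf{null}$ is the ideal of Lebesgue measure zero subsets of $2^\omega$, ordered by inclusion. For a poset $P$, a chain is a set of pairwise comparable elements and $\mathfrak{mc}(P)$ is the minimal cardinality of a maximal (under inclusion) chain. $\operatorname{non}(\mathsf{null})$ is the minimal size of a subset of $2^\omega$ that is not Lebesgue null. *)

From HB Require Import structures.
From mathcomp Require Import all_boot all_order all_algebra.
From mathcomp Require Import boolp classical_sets cardinality.
Set Implicit Arguments. Unset Strict Implicit. Unset Printing Implicit Defensive.
Import Order.TTheory GRing.Theory Num.Theory.

Definition cantor := nat -> bool.

Definition cyl (s : seq bool) : set cantor :=
  [set x | forall i, (i < size s)%N -> x i = nth false s i].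

(* measure of a cylinder under the standard (coin-flipping = Lebesgue) measure *)
Definition cyl_meas (s : seq bool) : rat := ((2%:R : rat) ^+ size s)^-1.

Definition null (A : set cantor) : Prop :=
  forall k : nat, exists s : nat -> seq bool,
    (A `<=` \bigcup_(n in [set: nat]) cyl (s n))%classic /\
    forall N : nat, (\sum_(n < N) cyl_meas (s n) <= ((2%:R : rat) ^+ k)^-1)%R.

Definition null_chain (C : set (set cantor)) : Prop :=
  (C `<=` null)%classic /\
  forall A B, C A -> C B -> (A `<=` B)%classic \/ (B `<=` A)%classic.

Definition maximal_null_chain (C : set (set cantor)) : Prop :=
  null_chain C /\ forall D, null_chain D -> (C `<=` D)%classic -> D = C.

From mathcomp Require Import all_boot all_order all_algebra.
From mathcomp Require Import mathcomp_extra boolp classical_sets cardinality wochoice.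
From mathcomp Require Import finmap topology cantor.
Set Implicit Arguments. Unset Strict Implicit. Unset Printing Implicit Defensive.
Import Order.TTheory GRing.Theory Num.Theory.
Local Open Scope classical_set_scope.

(* Only three properties of the null ideal are used: it is closed downwards,
   closed under adding a point, and does not contain the whole space.  For any
   family I of subsets of a set T with these properties we show:
   - non(I) <= mc(I): the union U of a maximal chain C is not in I (otherwise
     U and U plus a point outside U would both belong to C), and sending p to
     the union of the members of C avoiding p, plus p, injects U into C;
   - mc(I) <= non(I): well-order T and shrink a set X outside I to some Y
     included in X, still outside I, all of whose proper initial segments lie
     in I; these initial segments form a maximal chain indexed by Y.  That the whole Cantor
   space is not null combines its compactness (a countable cover by cylinders
   has a finite subcover) with the fact that finitely many cylinders covering
   the space have total measure at least 1, by induction on their lengths. *)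

Section WellOrder.
Variables (T : eqType) (R : rel T).
Hypothesis wR : well_order R.

Lemma wo_least (S : set T) : (exists x, S x) -> exists2 z, S z & forall y, S y -> R z y.
Proof.
move=> [x Sx]; have [|z [[+ lbz] _]] := @wR [pred y | `[< S y >]].
  by exists x; apply/asboolP.
move=> /asboolP Sz; exists z => // y Sy; apply: lbz; exact/asboolP.
Qed.

Let wR_chain : wo_chain R predT. Proof. exact: withinW. Qed.

Lemma wo_refl : reflexive R.
Proof. by move=> x; apply: (wo_chain_reflexive wR_chain). Qed.

Lemma wo_total : total R.
Proof. by move=> x y; apply: (wo_chainW wR_chain). Qed.

Lemma wo_anti : antisymmetric R.
Proof. by move=> x y; apply: (wo_chain_antisymmetric wR_chain). Qed.

(* Transitivity: look at the least element of {x, y, z}. *)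
Lemma wo_trans : transitive R.
Proof.
move=> y x z Rxy Ryz.
have [|m [[->|->]|->] least] := @wo_least [set x; y; z]; first by exists x; do 2 left.
- by apply: least; right.
- suff -> : x = y by [].
  by apply: wo_anti; rewrite Rxy least //; do 2 left.
- suff <- : y = z by [].
  by apply: wo_anti; rewrite Ryz least //; left; right.
Qed.

End WellOrder.

Section IdealChains.
Variables (T : Type) (I : set (set T)).

Definition ideal_chain (C : set (set T)) :=
  C `<=` I /\ forall A B, C A -> C B -> A `<=` B \/ B `<=` A.

Definition maximal_ideal_chain (C : set (set T)) :=
  ideal_chain C /\ forall D, ideal_chain D -> C `<=` D -> D = C.

Lemma maximal_chain_mem (C : set (set T)) : maximal_ideal_chain C ->
  forall N, I N -> (forall A, C A -> A `<=` N \/ N `<=` A) -> C N.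
Proof.
move=> [[CI Ccmp] Cmax] N IN cmpN; rewrite -(Cmax (C `|` [set N])); last 2 first.
- split=> [A [/CI|->] //|A B [CA|->] [CB|->]]; first exact: Ccmp.
  + exact: cmpN.
  + by have [] := cmpN B CB; [right|left].
  + by left.
- by move=> A CA; left.
by right.
Qed.

Hypothesis I_sub : forall A B, B `<=` A -> I A -> I B.
Hypothesis I_setU1 : forall A p, I A -> I (A `|` [set p]).
Hypothesis I_proper : ~ I setT.

Section MaximalChain.
Variable C : set (set T).
Hypothesis maxC : maximal_ideal_chain C.

Let CI : C `<=` I. Proof. by case: maxC => [[]]. Qed.
Let Ccmp A B : C A -> C B -> A `<=` B \/ B `<=` A.
Proof. by case: maxC => [[_ cmp] _]; exact: cmp. Qed.

(* The union of a maximal chain is not in I: otherwise both it and its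
   extension by a missing point would belong to the chain. *)
Lemma bigcup_maximal_chain_notin : ~ I (\bigcup_(A in C) A).
Proof.
set U := \bigcup_(A in C) A => IU.
have CU : C U by apply: maximal_chain_mem => // A CA; left => x Ax; exists A.
have [p Up] : exists p, ~ U p.
  apply: contrapT => allU; apply: I_proper; apply: I_sub IU => x _.
  by apply: contrapT => Ux; apply: allU; exists x.
have CUp : C (U `|` [set p]).
  apply: maximal_chain_mem => //; first exact: I_setU1.
  by move=> A CA; left => x Ax; left; exists A.
by apply: Up; exists (U `|` [set p]) => //; right.
Qed.

Definition cut (p : T) := \bigcup_(A in [set A | C A /\ ~ A p]) A `|` [set p].

(* For p in the union of C, the cut at p lies below every member containing p
   and above every member avoiding p, hence belongs to C by maximality. *)
Lemma cut_mem p : (\bigcup_(A in C) A) p -> C (cut p).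
Proof.
move=> [B CB Bp].
have below_B D : C D -> D p -> \bigcup_(A in [set A | C A /\ ~ A p]) A `<=` D.
  move=> CD Dp x [A [CA nAp] Ax].
  by have [AD|DA] := Ccmp CA CD; [exact: AD | have := nAp (DA p Dp)].
apply: (maximal_chain_mem maxC) => [|D CD].
  by apply: I_setU1; apply: I_sub (below_B B CB Bp) (CI CB).
have [Dp|nDp] := pselect (D p).
  by right => x [/(below_B D CD Dp)|->].
by left => x Dx; left; exists D.
Qed.

(* If p <> q had equal cuts, p would lie in a member avoiding q and q in a
   member avoiding p, contradicting comparability. *)
Lemma cut_inj : injective cut.
Proof.
move=> p q E.
have : cut q p by rewrite -E; right.
case=> [[A [CA nAq] Ap]|//].
have : cut p q by rewrite E; right.
case=> [[B [CB nBp] Bq]|->//].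
by have [AB|BA] := Ccmp CA CB; [have := nBp (AB p Ap) | have := nAq (BA q Bq)].
Qed.

Lemma bigcup_maximal_chain_le : (\bigcup_(A in C) A #<= C)%card.
Proof.
rewrite -(card_le_eql (inj_card_eq (in2W cut_inj))); apply: subset_card_le.
by move=> _ [p Up <-]; exact: cut_mem.
Qed.

End MaximalChain.

End IdealChains.

Section SmallSegments.
Variables (T : eqType) (I : set (set T)).
Hypothesis I_sub : forall A B, B `<=` A -> I A -> I B.
Hypothesis I_setU1 : forall A p, I A -> I (A `|` [set p]).
Variable R : rel T.
Hypothesis wR : well_order R.

Definition seg (Y : set T) (x : T) := [set y | Y y /\ ~ R x y].

Lemma seg_le (Y : set T) x y : R x y -> seg Y x `<=` seg Y y.
Proof. by move=> Rxy z [Yz nRxz]; split=> // Ryz; apply: nRxz; exact: wo_trans Rxy Ryz. Qed.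

Definition small_segments (Y : set T) := forall x, Y x -> I (seg Y x).

(* Every set outside I contains a set outside I with small segments: either X
   itself, or its initial segment below the least point m with seg X m
   outside I. *)
Lemma small_segments_sub (X : set T) : ~ I X ->
  exists2 Y, Y `<=` X & ~ I Y /\ small_segments Y.
Proof.
move=> nIX; have [[m Zm]|noZ] := pselect (exists m, X m /\ ~ I (seg X m)).
  have [|m0 [Xm0 nIm0] least] := @wo_least _ _ wR [set m | X m /\ ~ I (seg X m)].
    by exists m.
  exists (seg X m0); first by move=> x [].
  split=> // x [Xx nRm0x]; apply: (I_sub (A := seg X x)) => [y [[Xy _] nRxy] //|].
  by apply: contrapT => nIx; apply: nRm0x; apply: least.
by exists X => //; split=> // x Xx; apply: contrapT => nIx; apply: noZ; exists x.
Qed.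

Section SmallSegmentsChain.
Variable Y : set T.
Hypotheses (nIY : ~ I Y) (smallY : small_segments Y).

(* Y has no largest element, since Y is not seg Y y plus the point y. *)
Lemma small_segments_unbounded y : Y y -> exists2 z, Y z & ~ R z y.
Proof.
move=> Yy; apply: contrapT => bounded; apply: nIY.
apply: I_sub (I_setU1 y (smallY Yy)) => z Yz.
have [->|nzy] := eqVneq z y; first by right.
left; split=> // Ryz; apply: bounded; exists z => // Rzy.
by move/eqP: nzy; apply; apply: (wo_anti wR); rewrite Rzy Ryz.
Qed.

(* The initial segments of Y form a maximal chain: a set N of I comparable
   with all of them misses some point of Y, and N is the segment below the
   least such point z. *)
Lemma segments_maximal_chain : maximal_ideal_chain I (seg Y @` Y).
Proof.
split.
  split => [_ [x Yx <-]|_ _ [x _ <-] [y _ <-]]; first exact: smallY.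
  by have /orP [Rxy|Ryx] := wo_total wR x y; [left|right]; apply: seg_le.
move=> D [DI Dcmp] CD; apply/seteqP; split=> // N DN.
have [|z [Yz nNz] least] := @wo_least _ _ wR [set y | Y y /\ ~ N y].
  apply: contrapT => none; apply: nIY; apply: I_sub (DI N DN) => y Yy.
  by apply: contrapT => nNy; apply: none; exists y.
have N_sub v : Y v -> ~ R v z -> N `<=` seg Y v.
  move=> Yv nRvz; have [sub|//] := Dcmp _ _ (CD _ (imageP _ Yv)) DN.
  by have := nNz (sub z (conj Yz nRvz)).
exists z => //; apply/seteqP; split => w.
  by move=> [Yw nRzw]; apply: contrapT => nNw; apply: nRzw; apply: least.
move=> Nw; have [v Yv nRvz] := small_segments_unbounded Yz.
have [Yw _] := N_sub v Yv nRvz w Nw; split=> // Rzw.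
have nRwz : ~ R w z.
  move=> Rwz; apply: nNz; suff <- : w = z by [].
  by apply: (wo_anti wR); rewrite Rwz Rzw.
by have [_] := N_sub w Yw nRwz w Nw; apply; exact: wo_refl.
Qed.

End SmallSegmentsChain.
End SmallSegments.

Theorem maximal_chain_card_eq_non (T : eqType) (I : set (set T))
    (I_sub : forall A B, B `<=` A -> I A -> I B)
    (I_setU1 : forall A p, I A -> I (A `|` [set p]))
    (I_proper : ~ I setT) :
  (forall X : set T, ~ I X ->
     exists C, maximal_ideal_chain I C /\ (C #<= X)%card) /\
  (forall C, maximal_ideal_chain I C ->
     exists X : set T, ~ I X /\ (X #<= C)%card).
Proof.
split=> [X nIX|C maxC].
  have [R wR] := well_ordering_principle T.
  have [Y YX [nIY smallY]] := small_segments_sub I_sub wR nIX.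
  exists (seg R Y @` Y); split.
    exact: (segments_maximal_chain I_sub I_setU1 wR nIY smallY).
  exact: card_le_trans (card_image_le _ _) (subset_card_le YX).
exists (\bigcup_(A in C) A); split.
  exact: (bigcup_maximal_chain_notin I_sub I_setU1 I_proper maxC).
exact: (bigcup_maximal_chain_le I_sub I_setU1 maxC).
Qed.

Local Open Scope ring_scope.

Lemma null_sub (A B : set cantor) : B `<=` A -> null A -> null B.
Proof.
move=> BA nA k; have [s [cov bd]] := nA k; exists s; split=> //.
by move=> x /BA /cov.
Qed.

Lemma inv_pow2_half (k : nat) :
  ((2%:R : rat) ^+ k.+1)^-1 + ((2%:R : rat) ^+ k.+1)^-1 = ((2%:R : rat) ^+ k)^-1.
Proof. by rewrite exprS invfM -mulr2n -mulrnAl -mulr_natr mulVf ?mul1r. Qed.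

(* Cover A by a family of measure 2^-(k+1), and the point by a cylinder of
   the same measure. *)
Lemma null_setU1 (A : set cantor) (p : cantor) : null A -> null (A `|` [set p]).
Proof.
move=> nA k; have [s [cov bd]] := nA k.+1.
exists (fun n => if n is m.+1 then s m else mkseq p k.+1); split.
  move=> x [/cov [n _ cn]|->]; first by exists n.+1.
  by exists 0%N => // i; rewrite size_mkseq => ik; rewrite nth_mkseq.
case=> [|N]; first by rewrite big_ord0 invr_ge0 exprn_ge0.
rewrite big_ord_recl /= {1}/cyl_meas size_mkseq -[leRHS]inv_pow2_half.
exact: lerD (bd N).
Qed.

Lemma open_cyl (s : seq bool) : open (cyl s : set cantor_space).
Proof.
suff cyl_prefix n : open [set x : cantor_space | forall i, (i < n)%N -> x i = nth false s i].
  exact: cyl_prefix.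
elim: n => [|n IH].
  by rewrite (_ : [set x | _] = setT); [exact: openT | apply/seteqP; split].
have -> : [set x : cantor_space | forall i, (i < n.+1)%N -> x i = nth false s i] =
    [set x | forall i, (i < n)%N -> x i = nth false s i] `&`
    proj n @^-1` [set nth false s n].
  apply/seteqP; split => [x xs|x [xs xn] i].
    by split => [i ilt|]; apply: xs => //; apply: ltnW.
  by rewrite ltnS leq_eqVlt => /orP [/eqP ->|/xs].
apply: openI => //; apply: open_comp => [x _|]; first exact: proj_continuous.
exact: discrete_open.
Qed.

Definition covers (S : seq (seq bool)) := forall x : cantor, exists2 s, s \in S & cyl s x.

Lemma cyl_finite_subcover (s : nat -> seq bool) :
  (forall x : cantor, exists n, cyl (s n) x) ->
  exists N, covers [seq s n | n <- index_iota 0 N].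
Proof.
move=> cov.
have := cantor_space_compact; rewrite compact_cover => /(_ nat setT (fun n => cyl (s n))).
case=> [n _|x _|D _ fincov]; first exact: open_cyl.
  by have [n cn] := cov x; exists n.
exists (\max_(n <- D) n).+1 => x; have [n Dn cn] := fincov x I.
exists (s n) => //; apply: map_f; rewrite mem_index_iota ltnS.
exact: leq_bigmax_seq.
Qed.

Lemma cyl_meas_ge0 (s : seq bool) : 0 <= cyl_meas s.
Proof. by rewrite invr_ge0 exprn_ge0. Qed.

Lemma cyl_meas_nil : cyl_meas [::] = 1.
Proof. by rewrite /cyl_meas expr0 invr1. Qed.

Lemma cyl_meas_cons (b : bool) (t : seq bool) : cyl_meas (b :: t) = cyl_meas t / 2%:R.
Proof. by rewrite /cyl_meas exprS invfM mulrC. Qed.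

Definition subtree (S : seq (seq bool)) (b : bool) :=
  [seq behead s | s <- S & ohead s == Some b].

Lemma sum_cyl_meas_subtree (S : seq (seq bool)) (b : bool) :
  \sum_(s <- S | ohead s == Some b) cyl_meas s =
  (\sum_(t <- subtree S b) cyl_meas t) / 2%:R.
Proof.
rewrite /subtree big_map big_filter mulr_suml.
by apply: eq_bigr => -[|c t] //= _; rewrite cyl_meas_cons.
Qed.

Lemma sum_cyl_meas_split (S : seq (seq bool)) : [::] \notin S ->
  \sum_(s <- S) cyl_meas s =
  (\sum_(t <- subtree S false) cyl_meas t + \sum_(t <- subtree S true) cyl_meas t) / 2%:R.
Proof.
move=> nilS; rewrite mulrDl -!sum_cyl_meas_subtree addrC.
rewrite (bigID (fun s => ohead s == Some true)) /=; congr (_ + _).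
rewrite big_seq_cond [RHS]big_seq_cond; apply: eq_bigl => -[|[] t] //=.
by rewrite andbF; apply/negbTE; apply: contraNN nilS => /andP [].
Qed.

(* Prepending b to points turns covers of S into covers of subtree S b. *)
Lemma subtree_covers (S : seq (seq bool)) (b : bool) :
  [::] \notin S -> covers S -> covers (subtree S b).
Proof.
move=> nilS cov x; have [[|c t] St cxt] := cov (fun i => if i is j.+1 then x j else b).
  by rewrite St in nilS.
have <- : c = b by rewrite (cxt 0%N).
exists t; first by apply/mapP; exists (c :: t); rewrite // mem_filter /= eqxx.
by move=> i it; apply: (cxt i.+1).
Qed.

Lemma subtree_size (S : seq (seq bool)) (b : bool) (L : nat) :
  all (fun s => size s <= L.+1)%N S -> all (fun s => size s <= L)%N (subtree S b).
Proof.
move=> /allP sizeS; apply/allP => t /mapP [s]; rewrite mem_filter => /andP [_ /sizeS sz] ->.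
by rewrite size_behead; case: (size s) sz.
Qed.

Lemma nil_measure_ge1 (S : seq (seq bool)) :
  [::] \in S -> 1 <= \sum_(s <- S) cyl_meas s.
Proof.
move=> nilS; rewrite (big_rem _ nilS) cyl_meas_nil lerDl.
by apply: sumr_ge0 => s _; exact: cyl_meas_ge0.
Qed.

(* Induction on a bound L for the lengths: a cover avoiding the empty string
   splits into two covers by strings of length at most L, each of measure at
   least 1, whose measures are halved. *)
Lemma covers_measure_ge1_bounded (L : nat) (S : seq (seq bool)) :
  all (fun s => size s <= L)%N S -> covers S -> 1 <= \sum_(s <- S) cyl_meas s.
Proof.
elim: L S => [|L IH] S sizeS cov;
  (have [/nil_measure_ge1 //|nilS] := boolP ([::] \in S)).
  have [s Ss _] := cov (fun _ => false).
  by move/allP/(_ s Ss): sizeS; rewrite leqn0 size_eq0 => /eqP s0; rewrite -s0 Ss in nilS.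
have IHb b : 1 <= \sum_(t <- subtree S b) cyl_meas t.
  by apply: IH; [exact: subtree_size | exact: subtree_covers].
rewrite sum_cyl_meas_split // -[1](@mulfK _ 2%:R) // mulr_natr mulr2n.
by rewrite ler_pM2r ?lerD.
Qed.

Lemma covers_measure_ge1 (S : seq (seq bool)) : covers S -> 1 <= \sum_(s <- S) cyl_meas s.
Proof.
apply: (@covers_measure_ge1_bounded (\max_(s <- S) size s)).
by apply/allP => s Ss; exact: leq_bigmax_seq.
Qed.

(* A null cover of measure 1/2 would have a finite subcover of measure >= 1. *)
Lemma not_null_setT : ~ null [set: cantor].
Proof.
move=> /(_ 1%N) [s [cov bd]].
have [N coverN] : exists N, covers [seq s n | n <- index_iota 0 N].
  by apply: cyl_finite_subcover => x; have [n _] := cov x I; exists n.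
have := covers_measure_ge1 coverN.
rewrite big_map big_mkord => /le_trans/(_ (bd N)).
by rewrite expr1.
Qed.

Theorem mainTheorem11 :
  (forall X : set cantor, ~ null X ->
     exists C : set (set cantor), maximal_null_chain C /\ (C #<= X)%card) /\
  (forall C : set (set cantor), maximal_null_chain C ->
     exists X : set cantor, ~ null X /\ (X #<= C)%card).
Proof. exact: maximal_chain_card_eq_non null_sub null_setU1 not_null_setT. Qed.
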